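(* Let $q\in(0,1)$ and let $\{J_n\}_{n\ge1}$ be a sequence of random subsets of $\mathbb Z_{\ge0}$ (nonempty). Define $\eta_n=-\min(J_n)$ and $\phi_{n,x}=\prod_{j\in J_n}\frac{1}{1+q^{x+j}}$ for $n\ge1$, $x\in\mathbb R$. Then $\eta_n,\phi_{n,x}$ satisfy: (1) $0\le\phi_{n,x}\le\phi_{n,y}\le1$ for $x\le y$; (2) for every $\varepsilon>0$ there is $M$ with $\phi_{n,x}<\varepsilon$ whenever $\eta_n-x>M$, uniformly in $n,x$; (3) for every $\varepsilon>0$ there is $M$ with $\phi_{n,x}>1-\varepsilon$ whenever $\eta_n-x<-M$, uniformly in $n,x$; (4) there is $c>0$ independent of $n$ with $\phi_{n,x+1}-\phi_{n,x}\ge c$ whenever $x<\eta_n\le x+1$. Consequently the sequences $\{-\min(J_n)\}_{n\ge1}$ and $\{F_n(x)=\mathbb E\prod_{j\in J_n}(1+q^{x+j})^{-1}\}_{n\ge1}$ are asymptotically equivalent as $n\to\infty$.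
   Context: A sequence $\{\eta_n\}_{n\ge1}$ of real random variables spreads if $\lim_{n\to\infty}\sup_{x\in\mathbb R}\mathrm{Prob}\{x<\eta_n\le x+1\}=0$. A sequence $\{F_n\}_{n\ge1}$ of non-decreasing functions $\mathbb R\to\mathbb R$ spreads if $\lim_{n\to\infty}\sup_{x\in\mathbb R}(F_n(x+1)-F_n(x))=0$. A sequence of real random variables $\{\eta_n\}$ and a sequence of non-decreasing functions $\{F_n\}$ are asymptotically equivalent if (i) $\{\eta_n\}$ spreads if and only if $\{F_n\}$ spreads, and (ii) when both spread, $\lim_{n\to\infty}\sup_{x\in\mathbb R}(\mathrm{Prob}\{\eta_n\le x\}-F_n(x))=0$. *)

From HB Require Import structures.
From mathcomp Require Import all_boot all_order all_algebra.
From mathcomp Require Import all_classical all_reals all_analysis.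
Set Implicit Arguments. Unset Strict Implicit. Unset Printing Implicit Defensive.
Import Order.TTheory GRing.Theory Num.Theory.
Import numFieldNormedType.Exports.
Local Open Scope classical_set_scope.
Local Open Scope ring_scope.

(* min(J): the least element of J (meaningful when J is nonempty). *)
Definition minJ (J : pred nat) : nat :=
  xget 0%N [set m : nat | J m /\ forall k, J k -> (m <= k)%N].

Definition phi {R : realType} (q : R) (J : pred nat) (x : R) : R :=
  limn (fun N : nat => \prod_(j < N | J j) (1 + q `^ (x + j%:R))^-1).

Definition spreads_rv {d} {T : measurableType d} {R : realType}
  (P : probability T R) (eta : nat -> T -> R) : Prop :=
  (fun n => ereal_sup [set P [set w | x < eta n w <= x + 1] | x in [set: R]])
    @ \oo --> 0%E.

Definition spreads_fun {R : realType} (F : nat -> R -> R) : Prop :=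
  (fun n => ereal_sup [set ((F n (x + 1) - F n x)%:E) | x in [set: R]])
    @ \oo --> 0%E.

Definition asymp_equiv {d} {T : measurableType d} {R : realType}
  (P : probability T R) (eta : nat -> T -> R) (F : nat -> R -> R) : Prop :=
  (spreads_rv P eta <-> spreads_fun F) /\
  (spreads_rv P eta -> spreads_fun F ->
    (fun n => ereal_sup [set (P [set w | (eta n w <= x)%R] - (F n x)%:E)%E
                        | x in [set: R]]) @ \oo --> 0%E).

From HB Require Import structures.
From mathcomp Require Import all_boot all_order all_algebra.
From mathcomp Require Import all_classical all_reals all_analysis.
From mathcomp Require Import ring lra zify measurable_realfun.
Import Order.TTheory GRing.Theory Num.Theory.
Import numFieldNormedType.Exports.
Local Open Scope classical_set_scope.
Local Open Scope ring_scope.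

(* Each factor 1/(1 + q^(x+j)) increases from 0 to 1 with x.  For x far below
   eta = -min J the factor of index min J is already small; for x far above
   eta all factors are close to 1, the defect being controlled by the
   geometric tail of the q^(x+j); and when x < eta <= x + 1 the factor of
   index min J gains a fixed amount while the other factors stay bounded
   below.  Asymptotic equivalence then holds for every family phi with these
   four properties, with F(x) = E phi(x): by the jump, F(x+1) - F(x)
   dominates c P(x < eta <= x+1), and by the two tail bounds both
   F(x+1) - F(x) and P(eta <= x) - F(x) are at most eps plus the probability
   that eta falls in a window of bounded length around x, i.e. in boundedly
   many unit windows. *)

Lemma minJP (J : pred nat) : (exists j, J j) ->
  J (minJ J) /\ forall k, J k -> (minJ J <= k)%N.
Proof.
move=> exJ; apply: (@xgetPex _ 0%N [set m | J m /\ forall k, J k -> (m <= k)%N]).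
by case: (ex_minnP exJ) => m Jm hm; exists m.
Qed.

Lemma inv1pD_gap (R : realFieldType) (q u : R) : 0 < q < 1 -> 1 <= u -> q * u <= 1 ->
  q * (1 - q) / (2 * (1 + q)) <= (1 + u * q)^-1 - (1 + u)^-1.
Proof.
move=> /andP[q0 q1] u1 qu.
have A0 : 0 < 1 + u * q by nra.
have B0 : 0 < 1 + u by lra.
have -> : (1 + u * q)^-1 - (1 + u)^-1 = (u * (1 - q)) / ((1 + u * q) * (1 + u)).
  by field; rewrite !gt_eqF.
rewrite ler_pdivlMr ?mulr_gt0 // mulrAC ler_pdivrMr; last by lra.
have h1 : q * (1 + u) <= 1 + q by lra.
have h2 : 1 + u * q <= 2 by lra.
have h3 : q * ((1 + u * q) * (1 + u)) <= 2 * u * (1 + q) by nra.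
nra.
Qed.

Section InfiniteProduct.
Context {R : realType} (q : R).

Definition phi_factor (x : R) (j : nat) : R := (1 + q `^ (x + j%:R))^-1.

Definition phi_partial (J : pred nat) (x : R) (N : nat) : R :=
  \prod_(j < N | J j) phi_factor x j.

Lemma phi_factor_gt0 x j : 0 < phi_factor x j.
Proof. by rewrite invr_gt0 ltr_wpDr ?powR_ge0. Qed.

Lemma phi_factor_le1 x j : phi_factor x j <= 1.
Proof. by rewrite invf_le1 ?lerDl ?powR_ge0 // ltr_wpDr ?powR_ge0. Qed.

Lemma prod_phi_factor_le1 x N (P : pred nat) : \prod_(j < N | P j) phi_factor x j <= 1.
Proof. by apply: prodr_ile1 => j _; rewrite phi_factor_le1 ltW ?phi_factor_gt0. Qed.

Lemma phi_partial_ge0 J x N : 0 <= phi_partial J x N.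
Proof. by apply: prodr_ge0 => j _; exact/ltW/phi_factor_gt0. Qed.

Lemma phi_partialS J x N :
  phi_partial J x N.+1 = phi_partial J x N * (if J N then phi_factor x N else 1).
Proof. by rewrite /phi_partial big_mkcond big_ord_recr /= -big_mkcond. Qed.

Lemma phi_partial_nonincr J x : {homo phi_partial J x : n m / (n <= m)%N >-> m <= n}.
Proof.
apply/nonincreasing_seqP => N; rewrite phi_partialS; case: (J N); last by rewrite mulr1.
by rewrite ler_piMr ?phi_partial_ge0 ?phi_factor_le1.
Qed.

Lemma is_cvg_phi_partial J x : cvgn (phi_partial J x).
Proof.
apply: nonincreasing_is_cvgn; first exact: phi_partial_nonincr.
by exists 0 => _ [N _ <-]; exact: phi_partial_ge0.
Qed.

Lemma phi_le_partial J x N : phi q J x <= phi_partial J x N.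
Proof.
apply: nonincreasing_cvgn_ge; [exact: phi_partial_nonincr|exact: is_cvg_phi_partial].
Qed.

Lemma phi_ge_eventually J x a :
  (\forall N \near \oo, a <= phi_partial J x N) -> a <= phi q J x.
Proof. by move=> h; apply: limr_ge; [exact: is_cvg_phi_partial|]. Qed.

Lemma phi_ge0 J x : 0 <= phi q J x.
Proof. by apply: phi_ge_eventually; apply: nearW => N; exact: phi_partial_ge0. Qed.

Lemma phi_le1 J x : phi q J x <= 1.
Proof. by apply: le_trans (phi_le_partial J x 0) _; rewrite /phi_partial big_ord0. Qed.

Hypothesis q01 : 0 < q < 1.

Lemma phi_factor_homo j : {homo phi_factor^~ j : x y / x <= y}.
Proof.
have /andP[q0 q1] := q01; move=> x y xy; rewrite lef_pV2 ?posrE ?ltr_wpDr ?powR_ge0 //.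
by rewrite lerD2l; apply: ger_powR; [rewrite q0 ltW | rewrite lerD2r].
Qed.

Lemma phi_homo J : {homo phi q J : x y / x <= y}.
Proof.
move=> x y xy; apply: ler_lim; [exact: is_cvg_phi_partial|exact: is_cvg_phi_partial|].
apply: nearW => N; apply: ler_prod => j _.
by rewrite ltW ?phi_factor_gt0 ?phi_factor_homo.
Qed.

Lemma powRD_nat x N : q `^ (x + N.+1%:R) = q * q `^ (x + N%:R).
Proof.
have /andP[q0 _] := q01.
rewrite -natr1 addrA [LHS]powRD; last by apply/implyP => _; rewrite gt_eqF.
by rewrite powRr1 ?ltW // mulrC.
Qed.

Lemma geometric_tail_sum x m N :
  (1 - q) * \sum_(j < N | (m <= j)%N) q `^ (x + j%:R)
    <= q `^ (x + m%:R) - q `^ (x + (maxn N m)%:R).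
Proof.
elim: N => [|N IH]; first by rewrite big_ord0 mulr0 max0n subrr.
rewrite big_mkcond big_ord_recr /= -big_mkcond.
case: (leqP m N) => mN; last first.
  by rewrite addr0 (_ : maxn N.+1 m = maxn N m) // !maxnE; lia.
rewrite (maxn_idPl mN) (_ : maxn N.+1 m = N.+1) in IH *; last by apply/maxn_idPl; lia.
by rewrite powRD_nat; move: IH; set s := \sum_(_ < _ | _) _; nra.
Qed.

Lemma sum_powR_le x m N (P : pred nat) : (forall j, P j -> (m <= j)%N) ->
  \sum_(j < N | P j) q `^ (x + j%:R) <= q `^ (x + m%:R) / (1 - q).
Proof.
have /andP[q0 q1] := q01; move=> Pm.
apply: (@le_trans _ _ (\sum_(j < N | (m <= j)%N) q `^ (x + j%:R))).
  rewrite big_mkcond [X in _ <= X]big_mkcond /=; apply: ler_sum => j _.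
  case Pj: (P j); first by rewrite Pm.
  by case: ifP => // _; exact: powR_ge0.
rewrite ler_pdivlMr ?subr_gt0 // mulrC.
by apply: le_trans (geometric_tail_sum _ _ _) _; rewrite gerBl powR_ge0.
Qed.

(* [1 + t <= e^t] turns the product into the exponential of a geometric sum. *)
Lemma prod_phi_factor_ge_expR x m N (P : pred nat) : (forall j, P j -> (m <= j)%N) ->
  expR (- (q `^ (x + m%:R) / (1 - q))) <= \prod_(j < N | P j) phi_factor x j.
Proof.
move=> Pm; apply: (@le_trans _ _ (\prod_(j < N | P j) expR (- q `^ (x + j%:R)))).
  by rewrite -expR_sum ler_expR sumrN lerN2; exact: sum_powR_le.
apply: ler_prod => j _; rewrite expR_ge0 /= expRN.
by rewrite lef_pV2 ?posrE ?expR_gt0 ?ltr_wpDr ?powR_ge0 // expR_ge1Dx.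
Qed.

Lemma phi_partial_split x (J : pred nat) m N : J m ->
  (forall k, J k -> (m <= k)%N) -> (m < N)%N ->
  phi_partial J x N = phi_factor x m * \prod_(j < N | J j && (m < j)%N) phi_factor x j.
Proof.
move=> Jm Jge mN; rewrite /phi_partial (bigD1 (Ordinal mN)) //=; congr (_ * _).
apply: eq_bigl => j; case Jj: (J j) => //=.
by rewrite -val_eqE /= ltn_neqAle Jge // andbT eq_sym.
Qed.

Lemma powR_lt_eventually d : 0 < d -> exists M : R, forall t, M < t -> q `^ t < d.
Proof.
have /andP[q0 q1] := q01; move=> d0; exists (ln d / ln q) => t Mt.
rewrite /powR gt_eqF // -[X in _ < X](@lnK _ d) ?posrE // ltr_expR.
have lq : ln q < 0 by rewrite ln_lt0 // q0 q1.
by rewrite -(ltr_nM2r lq) mulfVK ?lt_eqF in Mt.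
Qed.

Lemma powR_gt_eventually K : 0 < K -> exists M : R, forall t, t < - M -> K < q `^ t.
Proof.
move=> K0; have [M hM] := @powR_lt_eventually K^-1 (ltac:(by rewrite invr_gt0)).
have /andP[q0 _] := q01.
exists M => t tM; have := hM (- t); rewrite ltrNr powRN => /(_ tM).
by rewrite -[K]invrK ltf_pV2 ?posrE ?invr_gt0 ?powR_gt0.
Qed.

Lemma phi_uniformly_small eps : 0 < eps -> exists M : R, forall (J : pred nat) x,
  (exists j, J j) -> M < - (minJ J)%:R - x -> phi q J x < eps.
Proof.
move=> eps0; have [M hM] := @powR_gt_eventually eps^-1 (ltac:(by rewrite invr_gt0)).
exists M => J x /minJP[Jm Jge] hx; set m := minJ J in Jm Jge hx.
apply: le_lt_trans (phi_le_partial J x m.+1) _.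
rewrite (phi_partial_split x _ _ _ Jm Jge (ltnSn m)).
apply: (@le_lt_trans _ _ (phi_factor x m)).
  apply: ler_piMr; first exact/ltW/phi_factor_gt0.
  exact: (prod_phi_factor_le1 _ _ (fun j => J j && (m < j)%N)).
have q_ge0 := powR_ge0 q (x + m%:R).
rewrite invf_plt ?posrE; [|lra..].
by apply: lt_le_trans (hM (x + m%:R) _) _; lra.
Qed.

Lemma phi_uniformly_near1 eps : 0 < eps -> exists M : R, forall (J : pred nat) x,
  (exists j, J j) -> - (minJ J)%:R - x < - M -> 1 - eps < phi q J x.
Proof.
have /andP[q0 q1] := q01; move=> eps0.
have [M hM] := @powR_lt_eventually (eps * (1 - q)) (ltac:(by rewrite mulr_gt0 ?subr_gt0)).
exists M => J x /minJP[Jm Jge] hx; set m := minJ J in Jm Jge hx.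
have small : q `^ (x + m%:R) / (1 - q) < eps.
  by rewrite ltr_pdivrMr ?subr_gt0 // hM //; lra.
apply: (@lt_le_trans _ _ (expR (- (q `^ (x + m%:R) / (1 - q))))).
  by have := expR_ge1Dx (- (q `^ (x + m%:R) / (1 - q))); lra.
apply: phi_ge_eventually; apply: nearW => N.
exact: prod_phi_factor_ge_expR.
Qed.

Lemma phi_factor_jump x m : -1 <= x + m%:R <= 0 ->
  q * (1 - q) / (2 * (1 + q)) <= phi_factor (x + 1) m - phi_factor x m.
Proof.
have /andP[q0 q1] := q01; move=> /andP[a1 a0]; set u := q `^ (x + m%:R).
have u1 : 1 <= u by rewrite -(powRr0 q); apply: ger_powR; rewrite // q0 ltW.
have qu : q * u <= 1.
  have : u <= q^-1 by rewrite -(powR_inv1 (ltW q0)); apply: ger_powR; rewrite // q0 ltW.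
  by rewrite -(ler_pM2l q0) mulfV ?gt_eqF.
rewrite /phi_factor (_ : x + 1 + m%:R = x + m%:R + 1); last by lra.
rewrite [q `^ (_ + 1)]powRD; last by apply/implyP => _; rewrite gt_eqF.
rewrite powRr1; [exact: inv1pD_gap | exact: ltW].
Qed.

Lemma prod_phi_factor_tail_ge x m N (P : pred nat) : -1 <= x + m%:R ->
  (forall j, P j -> (m < j)%N) -> expR (- (1 - q)^-1) <= \prod_(j < N | P j) phi_factor x j.
Proof.
have /andP[q0 q1] := q01; move=> a1 Pm.
apply: le_trans (prod_phi_factor_ge_expR x m.+1 N P Pm).
rewrite ler_expR lerN2 ler_pdivrMr ?subr_gt0 // mulVf ?gt_eqF ?subr_gt0 //.
rewrite -[leRHS](powRr0 q); apply: ger_powR; first by rewrite q0 ltW.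
by rewrite -natr1; lra.
Qed.

Lemma phi_jump_ge : exists c : R, 0 < c /\ forall (J : pred nat) x,
  (exists j, J j) -> x < - (minJ J)%:R <= x + 1 -> c <= phi q J (x + 1) - phi q J x.
Proof.
have /andP[q0 q1] := q01.
set g := q * (1 - q) / (2 * (1 + q)); set E := expR (- (1 - q)^-1).
have g0 : 0 < g by rewrite divr_gt0 ?mulr_gt0 ?subr_gt0 //; lra.
have E0 : 0 < E := expR_gt0 _.
exists (g * E); split; first exact: mulr_gt0.
move=> J x /minJP[Jm Jge] /andP[hx1 hx2]; set m := minJ J in Jm Jge hx1 hx2.
rewrite lerBrDr; apply: phi_ge_eventually; near=> N.
have mN : (m < N)%N by near: N; exists m.+1.
apply: (@le_trans _ _ (g * E + phi_partial J x N)); first by rewrite lerD2l phi_le_partial.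
rewrite !(phi_partial_split _ _ _ _ Jm Jge mN).
set r0 := \prod_(_ < _ | _) phi_factor x _; set r1 := \prod_(_ < _ | _) phi_factor (x + 1) _.
have r01 : r0 <= r1.
  by apply: ler_prod => j _; rewrite ltW ?phi_factor_gt0 ?phi_factor_homo //; lra.
have r0E : E <= r0.
  by apply: (prod_phi_factor_tail_ge x m N (fun j => J j && (m < j)%N)) => [|j /andP[]//]; lra.
have jump : g <= phi_factor (x + 1) m - phi_factor x m by apply: phi_factor_jump; lra.
have f0 := phi_factor_gt0 x m; have f1 := phi_factor_gt0 (x + 1) m.
have h1 : phi_factor (x + 1) m * r0 <= phi_factor (x + 1) m * r1.
  by apply: ler_wpM2l => //; exact: ltW.
have h2 : g * E <= (phi_factor (x + 1) m - phi_factor x m) * r0.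
  by apply: ler_pM => //; exact: ltW.
lra.
Unshelve. all: by end_near.
Qed.

End InfiniteProduct.

Lemma ereal_sup_image_ge (R : realType) (f : R -> \bar R) x0 :
  (f x0 <= ereal_sup [set f x | x in [set: R]])%E.
Proof. by apply: ereal_sup_ubound; exists x0. Qed.

Lemma cvg0_le_mul_add (R : realType) (u v : nat -> \bar R) :
  (forall n, 0 <= u n)%E -> (forall n, 0 <= v n)%E -> v @ \oo --> 0%E ->
  (forall e : R, 0 < e -> exists C : R, 0 < C /\ forall n, (u n <= C%:E * v n + e%:E)%E) ->
  u @ \oo --> 0%E.
Proof.
move=> u0 v0 /fine_cvgP [vfin vcvg] H.
have ufin : \forall n \near \oo, u n \is a fin_num.
  have [C [C0 hC]] := H 1 ltr01.
  near=> n; rewrite ge0_fin_numE // (le_lt_trans (hC n)) //.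
  have vf : v n \is a fin_num by near: n.
  by rewrite -(fineK vf) -EFinM -EFinD ltry.
apply/fine_cvgP; split => //.
apply/cvgrPdist_le => e e0.
have [C [C0 hC]] := H (e / 2) ltac:(by rewrite divr_gt0).
move/cvgrPdist_le : vcvg => /(_ (e / (2 * C)) ltac:(by rewrite divr_gt0 ?mulr_gt0)) hv.
near=> n.
have uf : u n \is a fin_num by near: n.
have vf : v n \is a fin_num by near: n.
have hvn : `|0 - fine (v n)| <= e / (2 * C) by near: n.
have := hC n; rewrite -(fineK uf) -(fineK vf) -EFinM -EFinD lee_fin => hu.
rewrite sub0r normrN ger0_norm ?fine_ge0 //.
rewrite sub0r normrN ger0_norm ?fine_ge0 // in hvn.
have h1 : C * fine (v n) <= e / 2.
  by rewrite (_ : e / 2 = C * (e / (2 * C))) ?ler_pM2l //; field; rewrite gt_eqF.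
rewrite /=; lra.
Unshelve. all: by end_near.
Qed.

Section ProbabilityFacts.
Context {d : measure_display} {T : measurableType d} {R : realType} (P : probability T R).

Lemma probability_fineK (A : set T) : measurable A -> P A = (fine (P A))%:E.
Proof.
move=> mA; rewrite fineK // ge0_fin_numE ?measure_ge0 //.
exact: le_lt_trans (probability_le1 P mA) (ltey _).
Qed.

Lemma integral01_bounds (f : T -> R) : measurable_fun setT f ->
  (forall w, 0 <= f w <= 1) -> (0 <= \int[P]_w (f w)%:E <= 1)%E.
Proof.
move=> mf f01; apply/andP; split.
  by apply: integral_ge0 => w _; rewrite lee_fin; case/andP: (f01 w).
apply: (@le_trans _ _ (\int[P]_w (cst 1%E w))%E).
  apply: ge0_le_integral => //.
  - by move=> w _; rewrite lee_fin; case/andP: (f01 w).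
  - exact/measurable_EFinP.
  - by move=> w _; rewrite lee_fin; case/andP: (f01 w).
by rewrite integral_cst // mul1e probability_le1.
Qed.

Lemma measurable_fun_add_indic_cst (g : T -> R) (A : set T) (a b : R) :
  measurable_fun setT g -> measurable A ->
  measurable_fun setT (fun w => (g w + a * \1_A w + b)%:E).
Proof.
move=> mg mA; apply/measurable_EFinP; apply: measurable_funD => //.
by apply: measurable_funD => //; apply: measurable_funM => //; exact: measurable_indic.
Qed.

Lemma integral_add_indic_cst (g : T -> R) (A : set T) (a b : R) :
  measurable_fun setT g -> (forall w, 0 <= g w) -> measurable A -> 0 <= a -> 0 <= b ->
  (\int[P]_w ((g w + a * \1_A w + b)%:E) = \int[P]_w (g w)%:E + a%:E * P A + b%:E)%E.
Proof.
move=> mg g0 mA a0 b0.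
have mi : measurable_fun setT (\1_A : T -> R) by exact: measurable_indic.
have ai0 w : 0 <= a * \1_A w by rewrite mulr_ge0 // indicE ler0n.
under eq_integral do rewrite EFinD.
rewrite ge0_integralD //; try (by move=> w _; rewrite lee_fin ?addr_ge0);
  try (by apply/measurable_EFinP; apply: measurable_funD => //; exact: measurable_funM).
under eq_integral do rewrite EFinD.
rewrite ge0_integralD //; try (by move=> w _; rewrite lee_fin ?addr_ge0);
  try (by apply/measurable_EFinP; exact: measurable_funM); try exact/measurable_EFinP.
have -> : (\int[P]_w (a * \1_A w)%:E = a%:E * P A)%E.
  under eq_integral do rewrite EFinM.
  rewrite ge0_integralZl_EFin //; try (by move=> w _; rewrite lee_fin indicE ler0n);
    try exact/measurable_EFinP.
  by rewrite integral_indic // setIT.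
rewrite integral_cst //; congr (_ + _)%E.
by rewrite -[RHS]mule1; congr (_ * _)%E; exact: probability_setT.
Qed.

Lemma le_integral_add_indic (g h : T -> R) (A : set T) (a b : R) :
  measurable_fun setT g -> measurable_fun setT h -> measurable A ->
  (forall w, 0 <= g w) -> (forall w, 0 <= h w) -> 0 <= a -> 0 <= b ->
  (forall w, g w <= h w + a * \1_A w + b) ->
  (\int[P]_w (g w)%:E <= \int[P]_w (h w)%:E + a%:E * P A + b%:E)%E.
Proof.
move=> mg mh mA g0 h0 a0 b0 gh; rewrite -integral_add_indic_cst //.
apply: ge0_le_integral => //; first by move=> w _; rewrite lee_fin.
- exact/measurable_EFinP.
- exact: measurable_fun_add_indic_cst.
- by move=> w _; rewrite lee_fin.
Qed.

Lemma ge_integral_add_indic (g h : T -> R) (A : set T) (a : R) :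
  measurable_fun setT g -> measurable_fun setT h -> measurable A ->
  (forall w, 0 <= h w) -> 0 <= a -> (forall w, h w + a * \1_A w <= g w) ->
  (\int[P]_w (h w)%:E + a%:E * P A <= \int[P]_w (g w)%:E)%E.
Proof.
move=> mg mh mA h0 a0 hg; rewrite -[leLHS]adde0 -integral_add_indic_cst //.
have ai0 w : 0 <= a * \1_A w by rewrite mulr_ge0 // indicE ler0n.
apply: ge0_le_integral => //; first by move=> w _; rewrite lee_fin addr0 addr_ge0.
- exact: measurable_fun_add_indic_cst.
- exact/measurable_EFinP.
- by move=> w _; rewrite lee_fin addr0.
Qed.

Lemma measure_window_le (e : T -> R) : (forall Q : set R, measurable [set w | Q (e w)]) ->
  forall (k : nat) (a : R), (P [set w | (a < e w <= a + k%:R)%R] <=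
     k%:R%:E * ereal_sup [set P [set w | (x < e w <= x + 1)%R] | x in [set: R]])%E.
Proof.
move=> me; set S := ereal_sup _.
have S0 : (0 <= S)%E := le_trans (measure_ge0 P _) (ereal_sup_image_ge R _ 0).
elim=> [|k IH] a.
  rewrite addr0 (_ : [set w | a < e w <= a] = set0) ?measure0 ?mule_ge0 ?lee_fin //.
  by apply/seteqP; split => w //= /andP[/lt_le_trans h /h]; rewrite ltxx.
have mI (b r : R) : measurable [set w | b < e w <= b + r] := me (fun t => b < t <= b + r).
apply: (@le_trans _ _ (P ([set w | a < e w <= a + k%:R] `|`
                         [set w | a + k%:R < e w <= a + k%:R + 1]))).
  apply: le_measure; rewrite ?inE; [exact: mI | exact: measurableU | ].
  move=> w /= /andP[h1 h2]; rewrite -natr1 addrA in h2.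
  by have [h3|h3] := lerP (e w) (a + k%:R); [left|right]; rewrite /= ?h1 ?h2 ?h3.
apply: le_trans (measureU2 _ (mI _ _) (mI _ _)) _.
rewrite -natr1 EFinD ge0_muleDl ?lee_fin // mul1e.
by apply: leeD; [exact: IH | exact: ereal_sup_image_ge].
Qed.

End ProbabilityFacts.

Lemma exists_nat_gt (R : archiRealDomainType) (x : R) : exists n : nat, x < n%:R.
Proof.
exists (Num.Def.archi_bound (Num.max 0 x)).
by apply: le_lt_trans (archi_boundP _); rewrite le_max lexx ?orbT.
Qed.

Section AsymptoticEquivalence.
Context {d : measure_display} {T : measurableType d} {R : realType} (P : probability T R).
Variables (eta : nat -> T -> R) (ph : nat -> T -> R -> R) (b c : R).
Hypothesis eta_meas : forall n (Q : set R), measurable [set w | Q (eta n w)].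
Hypothesis eta_ub : forall n w, eta n w <= b.
Hypothesis ph_meas : forall n x, measurable_fun setT (ph n ^~ x).
Hypothesis ph_ge0 : forall n w x, 0 <= ph n w x.
Hypothesis ph_le1 : forall n w x, ph n w x <= 1.
Hypothesis ph_homo : forall n w, {homo ph n w : x y / x <= y}.
Hypothesis ph_small : forall eps, 0 < eps ->
  exists M, forall n w x, M < eta n w - x -> ph n w x < eps.
Hypothesis ph_near1 : forall eps, 0 < eps ->
  exists M, forall n w x, eta n w - x < - M -> 1 - eps < ph n w x.
Hypothesis c_gt0 : 0 < c.
Hypothesis ph_jump : forall n w x, x < eta n w <= x + 1 -> c <= ph n w (x + 1) - ph n w x.

Let F n x := fine (\int[P]_w (ph n w x)%:E).
Let S n := ereal_sup [set P [set w | (x < eta n w <= x + 1)%R] | x in [set: R]].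

Let eta_window_meas n (a r : R) : measurable [set w | (a < eta n w <= a + r)%R].
Proof. exact: (eta_meas n (fun t => a < t <= a + r)). Qed.

Let ph01 n x : (0 <= \int[P]_w (ph n w x)%:E <= 1)%E.
Proof. by apply: integral01_bounds => // w; rewrite ph_ge0 ph_le1. Qed.

Lemma F_fineK n x : (\int[P]_w (ph n w x)%:E = (F n x)%:E)%E.
Proof.
by case/andP: (ph01 n x) => h0 h1; rewrite fineK // ge0_fin_numE // (le_lt_trans h1) ?ltey.
Qed.

Lemma F_le1 n x : F n x <= 1.
Proof. by rewrite -lee_fin -F_fineK; case/andP: (ph01 n x). Qed.

Lemma F_homo n : {homo F n : x y / x <= y}.
Proof.
move=> x y xy; rewrite -lee_fin -!F_fineK.
apply: ge0_le_integral => //; try exact/measurable_EFinP.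
- by move=> w _; rewrite lee_fin.
- by move=> w _; rewrite lee_fin ph_homo.
Qed.

Lemma S_ge0 n : (0 <= S n)%E.
Proof. exact: le_trans (measure_ge0 P _) (ereal_sup_image_ge R _ 0). Qed.

Lemma F_increment_ge n x :
  (c%:E * P [set w | (x < eta n w <= x + 1)%R] <= (F n (x + 1) - F n x)%:E)%E.
Proof.
set W := [set w | _]; have mW : measurable W by exact: eta_window_meas.
have := @ge_integral_add_indic _ _ _ P (ph n ^~ (x + 1)) (ph n ^~ x) W c
  (ph_meas _ _) (ph_meas _ _) mW (ph_ge0 n ^~ x) (ltW c_gt0).
rewrite !F_fineK (probability_fineK P _ mW) -EFinM -EFinD !lee_fin => le.
rewrite lerBrDl; apply: le.
move=> w; have [Ww|nWw] := pselect (W w).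
  by rewrite indicE mem_set //= mulr1 -lerBrDl ph_jump.
by rewrite indicE memNset //= mulr0 addr0 ph_homo ?lerDl.
Qed.

Lemma F_increment_le eps : 0 < eps -> exists k : nat, (0 < k)%N /\ forall n x,
  ((F n (x + 1) - F n x)%:E <= k%:R%:E * S n + eps%:E)%E.
Proof.
move=> eps0; have [M2 hM2] := ph_small _ eps0; have [M3 hM3] := ph_near1 _ eps0.
have [K hK] := exists_nat_gt _ (Num.max M2 M3).
have [KM2 KM3] : M2 < K%:R /\ M3 < K%:R by move: hK; rewrite gt_max => /andP.
exists (2 * K).+1; split => // n x.
have e2K : ((2 * K).+1)%:R = 2 * K%:R + 1 :> R by rewrite -natr1 natrM.
pose A := [set w | (x - K%:R < eta n w <= x - K%:R + ((2 * K).+1)%:R)%R].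
have mA : measurable A by exact: eta_window_meas.
have := le_integral_add_indic P _ _ _ _ _ (ph_meas n (x + 1)) (ph_meas n x) mA
  (ph_ge0 n ^~ (x + 1)) (ph_ge0 n ^~ x) ler01 (ltW eps0).
rewrite !F_fineK (probability_fineK P _ mA) mul1e -!EFinD lee_fin => le.
apply: le_trans (leeD (measure_window_le P _ (eta_meas n) _ (x - K%:R)) (lexx _)).
rewrite (probability_fineK P _ mA) -EFinD lee_fin lerBlDl addrA; apply: le.
move=> w; rewrite indicE; have [Aw|nAw] := boolP (w \in A).
  by rewrite mulr1 -addrA ler_wpDl ?ph_ge0 // (le_trans (ph_le1 _ _ _)) ?lerDl ?ltW.
rewrite mulr0 addr0; have [he|he] := lerP (eta n w) (x - K%:R).
  by have := hM3 n w x ltac:(lra); have := ph_le1 n w (x + 1); lra.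
have he2 : x - K%:R + ((2 * K).+1)%:R < eta n w.
  by rewrite ltNge; apply: contraNN nAw => he2; rewrite inE /A /= he he2.
by have := hM2 n w (x + 1) ltac:(lra); have := ph_ge0 n w x; lra.
Qed.

Lemma cdf_sub_F_le eps : 0 < eps -> exists k : nat, (0 < k)%N /\ forall n x,
  (P [set w | (eta n w <= x)%R] - (F n x)%:E <= k%:R%:E * S n + eps%:E)%E.
Proof.
move=> eps0; have [M3 hM3] := ph_near1 _ eps0.
have [K0 hK] := exists_nat_gt _ M3; exists K0.+1; split => // n x; set K := K0.+1.
have KM3 : M3 < K%:R by apply: lt_le_trans hK _; rewrite ler_nat.
set B := [set w | (eta n w <= x)%R].
pose A := [set w | (x - K%:R < eta n w <= x - K%:R + K%:R)%R].
have mA : measurable A by exact: eta_window_meas.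
have mB : measurable B by exact: (eta_meas n (fun t => t <= x)).
have le := le_integral_add_indic P _ _ _ _ _ (@measurable_indic _ _ R setT B mB)
  (ph_meas n x) mA (fun w => ler0n _ _) (ph_ge0 n ^~ x) ler01 (ltW eps0).
rewrite integral_indic // setIT F_fineK (probability_fineK P _ mA) mul1e -!EFinD in le.
have {}le : fine (P B) <= F n x + fine (P A) + eps.
  rewrite -lee_fin -(probability_fineK P _ mB); apply: le => w.
  have := ph_ge0 n w x; rewrite !indicE.
  have [Aw|nAw] := boolP (w \in A); have [Bw|nBw] := boolP (w \in B);
    rewrite /= ?mulr1 ?mulr0; try lra.
  have he : eta n w <= x - K%:R.
    by rewrite leNgt; apply: contraNN nAw => he; move: Bw; rewrite !inE /A /B /= he subrK.
  by have := hM3 n w x ltac:(lra); lra.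
apply: le_trans (leeD (measure_window_le P _ (eta_meas n) _ (x - K%:R)) (lexx _)).
rewrite (probability_fineK P _ mB) (probability_fineK P _ mA) -EFinB -EFinD lee_fin.
lra.
Qed.

Lemma spreads_fun_of_rv : spreads_rv P eta -> spreads_fun F.
Proof.
move=> hS; apply: (cvg0_le_mul_add _ _ _ _ (S_ge0) hS) => [n|e e0].
  apply: le_trans (ereal_sup_image_ge R _ 0); rewrite lee_fin subr_ge0.
  by apply: F_homo; rewrite lerDl.
have [k [k0 hk]] := F_increment_le _ e0; exists k%:R; split; first by rewrite ltr0n.
by move=> n; apply: ge_ereal_sup => _ [x _ <-]; exact: hk.
Qed.

Lemma spreads_rv_of_fun : spreads_fun F -> spreads_rv P eta.
Proof.
move=> hF; apply: (cvg0_le_mul_add _ _ _ (S_ge0) _ hF) => [n|e e0].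
  apply: le_trans (ereal_sup_image_ge R _ 0); rewrite lee_fin subr_ge0.
  by apply: F_homo; rewrite lerDl.
exists c^-1; split => [|n]; first by rewrite invr_gt0.
apply: ge_ereal_sup => _ [x _ <-].
have mW := eta_window_meas n x 1.
apply: (@le_trans _ _ (c^-1%:E * (F n (x + 1) - F n x)%:E)%E).
  rewrite (probability_fineK P _ mW) -EFinM lee_fin ler_pdivlMl //.
  by move: (F_increment_ge n x); rewrite (probability_fineK P _ mW) -EFinM lee_fin.
apply: (@le_trans _ _ (c^-1%:E *
    ereal_sup [set (F n (x + 1) - F n x)%:E | x in [set: R]])%E); last first.
  by apply: leeDl; rewrite lee_fin ltW.
apply: lee_wpmul2l; first by rewrite lee_fin invr_ge0 ltW.
exact: (ereal_sup_image_ge R (fun x => (F n (x + 1) - F n x)%:E) x).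
Qed.

Lemma cdf_sub_F_cvg0 : spreads_rv P eta ->
  (fun n => ereal_sup [set (P [set w | (eta n w <= x)%R] - (F n x)%:E)%E | x in [set: R]])
    @ \oo --> 0%E.
Proof.
move=> hS; apply: (cvg0_le_mul_add _ _ _ _ (S_ge0) hS) => [n|e e0].
  apply: le_trans (ereal_sup_image_ge R _ b).
  rewrite (_ : [set w | _] = setT); last by apply/seteqP; split => w // _; exact: eta_ub.
  by rewrite probability_setT -EFinB lee_fin subr_ge0 F_le1.
have [k [k0 hk]] := cdf_sub_F_le _ e0; exists k%:R; split; first by rewrite ltr0n.
by move=> n; apply: ge_ereal_sup => _ [x _ <-]; exact: hk.
Qed.

Theorem asymp_equiv_expectation : asymp_equiv P eta F.
Proof.
split; first by split; [exact: spreads_fun_of_rv | exact: spreads_rv_of_fun].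
by move=> hS _; exact: cdf_sub_F_cvg0.
Qed.

End AsymptoticEquivalence.

Section RandomSubset.
Context {d : measure_display} {T : measurableType d} (J : T -> pred nat).
Hypothesis J_meas : forall j, measurable [set w | J w j].
Hypothesis J_ne : forall w, exists j, J w j.

Lemma measurable_minJ_preimage (Q : set nat) : measurable [set w | Q (minJ (J w))].
Proof.
have minJ_eq k : [set w | minJ (J w) = k] =
    [set w | J w k] `&` \bigcap_i (if (i < k)%N then ~` [set w | J w i] else setT).
  apply/seteqP; split => w /=.
    move=> <-; have [Jm Jge] := minJP _ (J_ne w).
    by split => // i _; case: ifP => // ik /= Ji; have := Jge _ Ji; rewrite leqNgt ik.
  move=> [Jk Jlt]; have [Jm Jge] := minJP _ (J_ne w).
  apply/eqP; rewrite eqn_leq Jge //= leqNgt; apply/negP => mk.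
  by have := Jlt (minJ (J w)) I; rewrite mk; apply.
rewrite (_ : [set w | _] = \bigcup_(k in Q) [set w | minJ (J w) = k]).
  apply: bigcup_measurable => k _; rewrite minJ_eq; apply: measurableI => //.
  by apply: bigcapT_measurable => i; case: ifP => _ //; exact/measurableC.
apply/seteqP; split => w /=; first by exists (minJ (J w)).
by case=> k Qk /= ->.
Qed.

Lemma measurable_phi (R : realType) (q x : R) : measurable_fun setT (fun w => phi q (J w) x).
Proof.
apply: (measurable_fun_cvg (h := fun N w => phi_partial q (J w) x N)); last first.
  by move=> w _; exact: is_cvg_phi_partial.
move=> N; under eq_fun do rewrite /phi_partial big_mkcond.
apply: measurable_prod => j _; apply: measurable_fun_ifT => //.
apply: (measurable_fun_bool true); rewrite setTI.
by rewrite (_ : _ @^-1` _ = [set w | J w j]) //; apply/seteqP; split.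
Qed.

End RandomSubset.

Theorem corollary5p7 (d : measure_display) (T : measurableType d)
  (R : realType) (P : probability T R) (q : R)
  (J : nat -> T -> pred nat) :
  0 < q < 1 ->
  (forall n (j : nat), measurable [set w | J n w j]) ->
  (forall n w, exists j : nat, J n w j) ->
  let eta := fun n w => - ((minJ (J n w))%:R : R) in
  let ph := fun n w x => phi q (J n w) x in
  (* (1) *)
  (forall n w (x y : R), x <= y -> 0 <= ph n w x /\ ph n w x <= ph n w y /\ ph n w y <= 1) /\
  (* (2) *)
  (forall eps : R, 0 < eps -> exists M : R, forall n w x,
      eta n w - x > M -> ph n w x < eps) /\
  (* (3) *)
  (forall eps : R, 0 < eps -> exists M : R, forall n w x,
      eta n w - x < - M -> ph n w x > 1 - eps) /\
  (* (4) *)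
  (exists c : R, 0 < c /\ forall n w x,
      x < eta n w <= x + 1 -> ph n w (x + 1) - ph n w x >= c) /\
  (* conclusion *)
  asymp_equiv P eta (fun n x => fine (\int[P]_w (ph n w x)%:E)).
Proof.
move=> q01 J_meas J_ne eta ph.
have small eps (eps0 : 0 < eps) :
    exists M, forall n w x, M < eta n w - x -> ph n w x < eps.
  by have [M hM] := phi_uniformly_small _ q01 _ eps0; exists M => n w x; exact: hM (J_ne n w).
have near1 eps (eps0 : 0 < eps) :
    exists M, forall n w x, eta n w - x < - M -> 1 - eps < ph n w x.
  by have [M hM] := phi_uniformly_near1 _ q01 _ eps0; exists M => n w x; exact: hM (J_ne n w).
have [c [c0 jump]] : exists c, 0 < c /\ forall n w x,
    x < eta n w <= x + 1 -> c <= ph n w (x + 1) - ph n w x.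
  by have [c [c0 hc]] := phi_jump_ge _ q01; exists c; split => // n w x; exact: hc (J_ne n w).
split; first by move=> n w x y xy; rewrite /ph phi_ge0 phi_le1 phi_homo.
do 3!split => //; first by exists c.
apply: (asymp_equiv_expectation P eta ph 0 c _ _ _ _ _ _ small near1 c0 jump).
- by move=> n Q; exact: (measurable_minJ_preimage (J n) (J_meas n) (J_ne n) (fun k => Q (- k%:R))).
- by move=> n w; rewrite /eta oppr_le0.
- by move=> n x; exact: (measurable_phi (J n) (J_meas n)).
- by move=> *; exact: phi_ge0.
- by move=> *; exact: phi_le1.
- by move=> n w; exact: phi_homo.
Qed.
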